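(* Let $0<q<1$. Then \[ q^{2}(1+q)^{2}(1+q^{2})+q^{6}+(1+q^{2})\sum_{n=1}^{\infty}\frac{(1/2|q^{2})_{n}^{2}}{[n+1]_{q^{2}}!\,[n+2]_{q^{2}}!}\,q^{6n+6}=\frac{(1+q)^{6}(1+q^{2})^{2}}{\pi_{q}(1+q+q^{2})^{2}}\,q^{9/4}. \]
   Context: Let $0<q<1$ and write $q^{x}=e^{x\log q}$. $[z]_{q^2}=\frac{1-q^{2z}}{1-q^2}$; $[0]_{q^2}!=1$, $[n]_{q^2}!=\prod_{k=1}^n[k]_{q^2}$; $(1/2|q^2)_n=\prod_{k=0}^{n-1}[1/2+k]_{q^2}$. With $(z;q)_\infty=\prod_{k\ge0}(1-zq^k)$, $\pi_q=(1-q^2)q^{1/4}\frac{(q^2;q^2)_\infty^2}{(q;q^2)_\infty^2}$. *)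

From Stdlib Require Import Reals.
Open Scope R_scope.

Definition qpow (q x : R) : R := exp (x * ln q).

Definition qnum (q z : R) : R := (1 - qpow q (2 * z)) / (1 - q ^ 2).

Fixpoint qfact (q : R) (n : nat) : R :=
  match n with
  | O => 1
  | S m => qfact q m * qnum q (INR (S m))
  end.

(* (1/2|q^2)_n = prod_{k=0}^{n-1} [1/2 + k]_{q^2} *)
Fixpoint qhalf (q : R) (n : nat) : R :=
  match n with
  | O => 1
  | S m => qhalf q m * qnum q (1 / 2 + INR m)
  end.

Fixpoint qpoch_partial (z b : R) (N : nat) : R :=
  match N with
  | O => 1
  | S m => qpoch_partial z b m * (1 - z * b ^ m)
  end.

Definition qpoch_inf_is (z b L : R) : Prop :=
  Un_cv (fun N => qpoch_partial z b N) L.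

(* pi_q = (1-q^2) q^{1/4} (q^2;q^2)_inf^2 / (q;q^2)_inf^2, given the values A, B *)
Definition pi_q_of (q A B : R) : R :=
  (1 - q ^ 2) * qpow q (1 / 4) * (A ^ 2) / (B ^ 2).

Definition summand (q : R) (n : nat) : R :=
  (qhalf q n) ^ 2 / (qfact q (n + 1) * qfact q (n + 2)) * q ^ (6 * n + 6).

(* With base p = q^2 one has [n]_{q^2}! = (q^2; q^2)_n / (1 - q^2)^n and
   (1/2|q^2)_n = (q; q^2)_n / (1 - q^2)^n, so the left-hand side is
   q^2 (1 + q)^2 (1 + q^2) times the whole basic hypergeometric series
   G(c) = 2phi1(a, b; c; p, c/(ab)) with a = b = 1/q and c = q^4.  The q-Gauss formula
   G(c) = (c/a; p)_oo (c/b; p)_oo / ((c; p)_oo (c/(ab); p)_oo) evaluates it, and the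
   products (q^4; q^2)_oo, (q^5; q^2)_oo, (q^6; q^2)_oo reduce to (q^2; q^2)_oo and
   (q; q^2)_oo.  The q-Gauss formula itself follows from the contiguity relation
   G(c) = (1 - c/a)(1 - c/b) / ((1 - c)(1 - c/(ab))) G(cp), whose termwise difference
   telescopes; iterate it N times and let N -> oo, where G(c p^N) -> 1. *)

From Stdlib Require Import Reals Lra Lia.
From Coquelicot Require Import Coquelicot.
Open Scope R_scope.

Lemma exp_le_compat x y : x <= y -> exp x <= exp y.
Proof. intros [h|<-]; [left; apply exp_increasing | right]; auto. Qed.

Lemma exp_neg_le_one_sub x m : 0 <= x <= m -> m < 1 -> exp (- (x / (1 - m))) <= 1 - x.
Proof.
  intros hx hm.
  assert (hxm : x <= x / (1 - m) * (1 - x)).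
  { apply (Rmult_le_reg_r (1 - m)); [lra|].
    replace (x / (1 - m) * (1 - x) * (1 - m)) with (x * (1 - x)) by (field; lra).
    nra. }
  assert (0 <= x / (1 - m)) by (apply Rdiv_le_0_compat; lra).
  pose proof (exp_ineq1_le (x / (1 - m))).
  pose proof (exp_pos (x / (1 - m))).
  rewrite exp_Ropp. apply (Rmult_le_reg_r (exp (x / (1 - m)))); auto.
  rewrite Rinv_l by lra. nra.
Qed.

Lemma is_series_succ (u : nat -> R) (l : R) :
  is_series u l -> is_series (fun n => u (S n)) (l - u 0%nat).
Proof.
  intros h. apply is_series_incr_1.
  change (plus (l - u 0%nat) (u 0%nat)) with (l - u 0%nat + u 0%nat).
  replace (l - u 0%nat + u 0%nat) with l by ring. exact h.
Qed.

Lemma qpoch_partial_shift y p n :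
  qpoch_partial y p (S n) = (1 - y) * qpoch_partial (y * p) p n.
Proof.
  induction n as [|n IH]; [simpl; ring|].
  change (qpoch_partial y p (S (S n))) with (qpoch_partial y p (S n) * (1 - y * p ^ S n)).
  rewrite IH. simpl. ring.
Qed.

Section PartialPochhammer.

Variable p : R.
Hypothesis hp : 0 <= p < 1.

Lemma pow_base_bounds n : 0 <= p ^ n <= 1.
Proof.
  split; [apply pow_le; lra|].
  rewrite <- (pow1 n). apply pow_incr. lra.
Qed.

Lemma qpoch_partial_ge_exp y m n : 0 <= y <= m -> m < 1 ->
  exp (- (y / ((1 - m) * (1 - p)))) <= qpoch_partial y p n.
Proof.
  revert y. induction n as [|n IH]; intros y hy hm.
  - simpl. apply Rle_trans with (exp 0); [apply exp_le_compat | rewrite exp_0; lra].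
    assert (0 <= y / ((1 - m) * (1 - p))) by (apply Rdiv_le_0_compat; nra). lra.
  - rewrite qpoch_partial_shift.
    (* the factor (1 - y) contributes y/(1-m), the tail (yp; p)_n the rest *)
    replace (- (y / ((1 - m) * (1 - p)))) with
      (- (y / (1 - m)) + - (y * p / ((1 - m) * (1 - p)))) by (field; lra).
    rewrite exp_plus.
    apply Rmult_le_compat; try (left; apply exp_pos).
    + apply exp_neg_le_one_sub; lra.
    + apply IH; nra.
Qed.

Lemma qpoch_partial_pos y n : 0 <= y < 1 -> 0 < qpoch_partial y p n.
Proof.
  intros hy. eapply Rlt_le_trans; [apply exp_pos|].
  apply (qpoch_partial_ge_exp y y); lra.
Qed.

Lemma Rabs_qpoch_partial_le y n : Rabs (qpoch_partial y p n) <= exp (Rabs y / (1 - p)).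
Proof.
  revert y. induction n as [|n IH]; intros y.
  - simpl. rewrite Rabs_R1. apply Rle_trans with (exp 0); [rewrite exp_0; lra | apply exp_le_compat].
    apply Rdiv_le_0_compat; [apply Rabs_pos | lra].
  - rewrite qpoch_partial_shift, Rabs_mult.
    replace (Rabs y / (1 - p)) with (Rabs y + Rabs (y * p) / (1 - p))
      by (rewrite Rabs_mult, (Rabs_pos_eq p) by lra; field; lra).
    rewrite exp_plus.
    apply Rmult_le_compat; try apply Rabs_pos; auto.
    eapply Rle_trans; [|apply exp_ineq1_le].
    eapply Rle_trans; [apply Rabs_triang|]. rewrite Rabs_R1, Rabs_Ropp. lra.
Qed.

Lemma qpoch_partial_decreasing y n : 0 <= y < 1 ->
  qpoch_partial y p (S n) <= qpoch_partial y p n.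
Proof.
  intros hy. simpl.
  pose proof (qpoch_partial_pos y n hy). pose proof (pow_base_bounds n).
  assert (0 <= y * p ^ n) by nra. nra.
Qed.

Lemma qpoch_partial_cvg y : 0 <= y < 1 ->
  exists L : R, is_lim_seq (qpoch_partial y p) L.
Proof.
  intros hy.
  destruct (ex_finite_lim_seq_decr (qpoch_partial y p) 0) as [L hL].
  - intros n. apply qpoch_partial_decreasing; auto.
  - intros n. left. apply qpoch_partial_pos; auto.
  - exists L. exact hL.
Qed.

Lemma qpoch_lim_pos y (L : R) : 0 <= y < 1 -> is_lim_seq (qpoch_partial y p) L -> 0 < L.
Proof.
  intros hy hL.
  set (e := exp (- (y / ((1 - y) * (1 - p))))).
  assert (hle : forall n, e <= qpoch_partial y p n)
    by (intros n; apply (qpoch_partial_ge_exp y y); lra).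
  pose proof (is_lim_seq_le (fun _ => e) _ e L hle (is_lim_seq_const e) hL) as h.
  simpl in h. eapply Rlt_le_trans; [apply exp_pos | exact h].
Qed.

End PartialPochhammer.

Lemma is_lim_seq_qpoch_shift y p (L : R) : y <> 1 ->
  is_lim_seq (qpoch_partial y p) L -> is_lim_seq (qpoch_partial (y * p) p) (L / (1 - y)).
Proof.
  intros hy hL.
  apply (is_lim_seq_ext (fun n => qpoch_partial y p (S n) / (1 - y))).
  { intros n. rewrite qpoch_partial_shift. field. lra. }
  apply is_lim_seq_div'; [|apply is_lim_seq_const|lra].
  exact (proj1 (is_lim_seq_incr_1 _ _) hL).
Qed.

(* n-th term of 2phi1(a, b; c; p, c/(ab)) *)
Definition gauss_term (a b p c : R) (n : nat) : R :=
  qpoch_partial a p n * qpoch_partial b p n / (qpoch_partial p p n * qpoch_partial c p n)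
  * (c / (a * b)) ^ n.

Section QGauss.

Variables a b p : R.
Hypothesis hp : 0 <= p < 1.
Hypothesis hab : 0 < a * b.

Let ha : a <> 0. Proof. intros ->. lra. Qed.
Let hb : b <> 0. Proof. intros ->. lra. Qed.

Let ratio_bounds c : 0 <= c < a * b -> 0 <= c / (a * b) < 1.
Proof.
  intros hc. split; [apply Rdiv_le_0_compat; lra|].
  apply (Rmult_lt_reg_r (a * b)); auto. field_simplify; lra.
Qed.

Lemma gauss_term_succ c n : 0 <= c < 1 ->
  gauss_term a b p c (S n) = gauss_term a b p c n
    * ((1 - a * p ^ n) * (1 - b * p ^ n) * (c / (a * b))) / ((1 - p * p ^ n) * (1 - c * p ^ n)).
Proof.
  intros hc. pose proof (pow_base_bounds p hp n).
  pose proof (qpoch_partial_pos p hp p n hp). pose proof (qpoch_partial_pos p hp c n hc).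
  unfold gauss_term. cbn [qpoch_partial pow].
  field. repeat split; try lra; nra.
Qed.

Lemma gauss_term_mulp c n : 0 <= c < 1 ->
  gauss_term a b p (c * p) n = gauss_term a b p c n * ((1 - c) * p ^ n) / (1 - c * p ^ n).
Proof.
  intros hc. pose proof (pow_base_bounds p hp n).
  pose proof (qpoch_partial_pos p hp p n hp). pose proof (qpoch_partial_pos p hp c n hc).
  assert (hshift : qpoch_partial (c * p) p n = qpoch_partial c p n * (1 - c * p ^ n) / (1 - c)).
  { pose proof (qpoch_partial_shift c p n) as h. cbn [qpoch_partial] in h.
    apply (Rmult_eq_reg_l (1 - c)); [|lra]. rewrite <- h. field. lra. }
  unfold gauss_term. rewrite hshift.
  replace (c * p / (a * b)) with (c / (a * b) * p) by (field; auto).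
  rewrite Rpow_mult_distr.
  field. repeat split; try lra; nra.
Qed.

Lemma gauss_term_bound c : 0 <= c < 1 -> exists M, 0 <= M /\
  forall c' n, 0 <= c' <= c -> Rabs (gauss_term a b p c' n) <= M * (c' / (a * b)) ^ n.
Proof.
  intros hc.
  set (lo y := exp (- (y / ((1 - y) * (1 - p))))).
  set (hi y := exp (Rabs y / (1 - p))).
  exists (hi a * hi b / (lo p * lo c)).
  assert (hlo : forall y, 0 < lo y) by (intros; apply exp_pos).
  assert (hhi : forall y, 0 < hi y) by (intros; apply exp_pos).
  split; [left; apply Rdiv_lt_0_compat; apply Rmult_lt_0_compat; auto|].
  intros c' n hc'.
  assert (hden : forall y, 0 <= y <= c -> lo c <= qpoch_partial y p n).
  { intros y hy. eapply Rle_trans; [|apply (qpoch_partial_ge_exp p hp y c); lra].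
    apply exp_le_compat, Ropp_le_contravar.
    unfold Rdiv. apply Rmult_le_compat_r; [|lra].
    left; apply Rinv_0_lt_compat, Rmult_lt_0_compat; lra. }
  assert (hpp : lo p <= qpoch_partial p p n) by (apply (qpoch_partial_ge_exp p hp p p); lra).
  pose proof (hden c' hc'). pose proof (hlo p). pose proof (hlo c).
  pose proof (Rabs_qpoch_partial_le p hp a n). pose proof (Rabs_qpoch_partial_le p hp b n).
  assert (hz : 0 <= (c' / (a * b)) ^ n) by (apply pow_le, Rdiv_le_0_compat; lra).
  unfold gauss_term.
  rewrite Rabs_mult, (Rabs_pos_eq ((c' / (a * b)) ^ n) hz).
  apply Rmult_le_compat_r; [exact hz|].
  unfold Rdiv. rewrite Rabs_mult, Rabs_inv, !Rabs_mult.
  rewrite (Rabs_pos_eq (qpoch_partial p p n)), (Rabs_pos_eq (qpoch_partial c' p n)) by lra.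
  apply Rmult_le_compat; try apply Rmult_le_pos; try apply Rabs_pos.
  - left; apply Rinv_0_lt_compat. nra.
  - apply Rmult_le_compat; auto; apply Rabs_pos.
  - apply Rinv_le_contravar; [apply Rmult_lt_0_compat; auto | apply Rmult_le_compat; lra].
Qed.

Lemma ex_series_gauss_term c : 0 <= c < 1 -> c < a * b -> ex_series (gauss_term a b p c).
Proof.
  intros hc hcab. destruct (gauss_term_bound c hc) as [M [_ hM]].
  pose proof (ratio_bounds c ltac:(lra)).
  apply (@ex_series_le R_AbsRing R_CompleteNormedModule _ (fun n => M * (c / (a * b)) ^ n)).
  - intros n. apply hM. lra.
  - apply (@ex_series_scal_l R_AbsRing R_NormedModule), ex_series_geom.
    rewrite Rabs_pos_eq; lra.
Qed.

Lemma gauss_series_near_one c : 0 <= c < 1 -> c < a * b ->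
  exists M, forall c', 0 <= c' <= c -> Rabs (Series (gauss_term a b p c') - 1) <= M * c'.
Proof.
  intros hc hcab. destruct (gauss_term_bound c hc) as [M [hM0 hM]].
  pose proof (ratio_bounds c ltac:(lra)) as hr.
  exists (M / (a * b * (1 - c / (a * b)))). intros c' hc'.
  set (z := c' / (a * b)).
  assert (hz : 0 <= z <= c / (a * b)).
  { split; [apply Rdiv_le_0_compat; lra|].
    apply Rmult_le_compat_r; [left; apply Rinv_0_lt_compat|]; lra. }
  set (u n := gauss_term a b p c' (S n)).
  assert (hu : forall n, Rabs (u n) <= M * z * z ^ n)
    by (intros n; rewrite Rmult_assoc; apply hM; lra).
  assert (hgeom : is_series (fun n => M * z * z ^ n) (M * z / (1 - z))).
  { apply (@is_series_scal_l R_AbsRing R_NormedModule), is_series_geom.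
    rewrite Rabs_pos_eq; lra. }
  assert (habs : ex_series (fun n => Rabs (u n))).
  { apply (@ex_series_le R_AbsRing R_CompleteNormedModule _ (fun n => M * z * z ^ n));
      [|eexists; exact hgeom].
    intros n. change norm with Rabs. simpl. rewrite Rabs_Rabsolu. apply hu. }
  assert (htail : Rabs (Series u) <= M * z / (1 - z)).
  { eapply Rle_trans; [apply Series_Rabs, habs|].
    rewrite <- (is_series_unique _ _ hgeom).
    apply Series_le; [intros n; split; [apply Rabs_pos | apply hu] | eexists; exact hgeom]. }
  assert (h0 : gauss_term a b p c' 0 = 1) by (unfold gauss_term; simpl; field).
  rewrite (Series_incr_1 _ (ex_series_gauss_term c' ltac:(lra) ltac:(lra))), h0.
  fold u. replace (1 + Series u - 1) with (Series u) by ring.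
  eapply Rle_trans; [exact htail|].
  apply Rle_trans with (M * z / (1 - c / (a * b))).
  - unfold Rdiv. apply Rmult_le_compat_l; [nra|]. apply Rinv_le_contravar; lra.
  - right. unfold z. field. lra.
Qed.

Lemma gauss_series_contiguous c : 0 <= c < 1 -> c < a * b ->
  Series (gauss_term a b p c) = (1 - c / a) * (1 - c / b) / ((1 - c) * (1 - c / (a * b)))
    * Series (gauss_term a b p (c * p)).
Proof.
  intros hc hcab. pose proof (ratio_bounds c ltac:(lra)) as hr.
  set (K := (1 - c / a) * (1 - c / b) / ((1 - c) * (1 - c / (a * b)))).
  set (D n := gauss_term a b p c n * (1 - p ^ n)).
  assert (hD : ex_series D).
  { destruct (gauss_term_bound c hc) as [M [_ hM]].
    apply (@ex_series_le R_AbsRing R_CompleteNormedModule _ (fun n => M * (c / (a * b)) ^ n)).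
    - intros n. change norm with Rabs. simpl. unfold D. rewrite Rabs_mult.
      pose proof (pow_base_bounds p hp n). pose proof (Rabs_pos (gauss_term a b p c n)).
      rewrite (Rabs_pos_eq (1 - p ^ n)) by lra.
      eapply Rle_trans; [|apply (hM c n); lra]. nra.
    - apply (@ex_series_scal_l R_AbsRing R_NormedModule), ex_series_geom.
      rewrite Rabs_pos_eq; lra. }
  (* the contiguity relation telescopes termwise *)
  assert (htele : forall n, gauss_term a b p c n - K * gauss_term a b p (c * p) n
                            = (D n - D (S n)) / (1 - c / (a * b))).
  { intros n. unfold D, K. rewrite gauss_term_succ, gauss_term_mulp by lra.
    pose proof (pow_base_bounds p hp n). cbn [pow].
    field. repeat split; try lra; nra. }
  assert (hcp : 0 <= c * p <= c) by (destruct hp; split; nra).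
  assert (hsum : Series (fun n => gauss_term a b p c n - K * gauss_term a b p (c * p) n) = 0).
  { rewrite (Series_ext _ _ htele). unfold Rdiv.
    assert (hDS : ex_series (fun n => D (S n))) by exact (proj1 (ex_series_incr_1 D) hD).
    rewrite Series_scal_r, Series_minus, (Series_incr_1 D hD) by auto.
    replace (D 0%nat) with 0 by (unfold D; simpl; ring). ring. }
  rewrite Series_minus, Series_scal_l in hsum.
  - lra.
  - apply ex_series_gauss_term; lra.
  - apply (@ex_series_scal_l R_AbsRing R_NormedModule), ex_series_gauss_term; lra.
Qed.

Lemma gauss_series_iterate c N : 0 <= c < 1 -> c < a * b ->
  Series (gauss_term a b p c) * qpoch_partial c p N * qpoch_partial (c / (a * b)) p N
  = qpoch_partial (c / a) p N * qpoch_partial (c / b) p N * Series (gauss_term a b p (c * p ^ N)).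
Proof.
  intros hc hcab. induction N as [|N IH].
  - cbn [qpoch_partial pow]. replace (c * 1) with c by ring. ring.
  - pose proof (pow_base_bounds p hp N).
    assert (hcN : 0 <= c * p ^ N <= c) by (split; nra).
    cbn [qpoch_partial]. rewrite <- tech_pow_Rmult.
    replace (c * (p * p ^ N)) with (c * p ^ N * p) by ring.
    rewrite (gauss_series_contiguous (c * p ^ N)) in IH by lra.
    pose proof (ratio_bounds (c * p ^ N) ltac:(lra)).
    transitivity (Series (gauss_term a b p c) * qpoch_partial c p N * qpoch_partial (c / (a * b)) p N
                  * ((1 - c * p ^ N) * (1 - c / (a * b) * p ^ N))); [ring|].
    rewrite IH. field. repeat split; lra.
Qed.

Lemma gauss_series_tends_to_one c : 0 <= c < 1 -> c < a * b ->
  is_lim_seq (fun N => Series (gauss_term a b p (c * p ^ N))) 1.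
Proof.
  intros hc hcab. destruct (gauss_series_near_one c hc hcab) as [M hM].
  assert (hlim : forall s, is_lim_seq (fun N => 1 + s * (M * c) * p ^ N) 1).
  { intros s. replace (Finite 1) with (Finite (1 + s * (M * c) * 0)) by (f_equal; ring).
    apply (is_lim_seq_plus' (fun _ => 1)); [apply is_lim_seq_const|].
    apply (is_lim_seq_scal_l _ _ (Finite 0)), is_lim_seq_geom. rewrite Rabs_pos_eq; lra. }
  refine (is_lim_seq_le_le _ _ _ _ _ (hlim (-1)) (hlim 1)). intros N.
  pose proof (pow_base_bounds p hp N).
  pose proof (hM (c * p ^ N) ltac:(split; nra)) as hN.
  apply Rabs_le_between' in hN. lra.
Qed.

Theorem q_gauss_sum c (Lc Lz La Lb : R) : 0 <= c < 1 -> c < a * b ->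
  is_lim_seq (qpoch_partial c p) Lc -> is_lim_seq (qpoch_partial (c / (a * b)) p) Lz ->
  is_lim_seq (qpoch_partial (c / a) p) La -> is_lim_seq (qpoch_partial (c / b) p) Lb ->
  is_series (gauss_term a b p c) (La * Lb / (Lc * Lz)).
Proof.
  intros hc hcab hLc hLz hLa hLb.
  pose proof (ratio_bounds c ltac:(lra)).
  pose proof (qpoch_lim_pos p hp c Lc hc hLc).
  pose proof (qpoch_lim_pos p hp (c / (a * b)) Lz ltac:(lra) hLz).
  set (G := Series (gauss_term a b p c)).
  assert (hl : is_lim_seq (fun N => G * qpoch_partial c p N * qpoch_partial (c / (a * b)) p N)
                 (G * Lc * Lz)).
  { apply is_lim_seq_mult'; [|exact hLz].
    apply (is_lim_seq_scal_l _ G Lc hLc). }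
  assert (hr : is_lim_seq (fun N => G * qpoch_partial c p N * qpoch_partial (c / (a * b)) p N)
                 (La * Lb * 1)).
  { apply (is_lim_seq_ext _ _ _ (fun N => eq_sym (gauss_series_iterate c N hc hcab))).
    apply is_lim_seq_mult'; [apply is_lim_seq_mult'; auto|].
    apply gauss_series_tends_to_one; auto. }
  apply is_lim_seq_unique in hl. apply is_lim_seq_unique in hr.
  rewrite hl in hr. injection hr as hG.
  replace (La * Lb / (Lc * Lz)) with G
    by (rewrite <- (Rmult_1_r (La * Lb)), <- hG; field; lra).
  apply Series_correct, ex_series_gauss_term; lra.
Qed.

End QGauss.

Lemma qpow_nat q n : 0 < q -> qpow q (INR n) = q ^ n.
Proof. intros hq. exact (Rpower_pow n q hq). Qed.

Lemma qnum_nat q k : 0 < q -> qnum q (INR k) = (1 - (q ^ 2) ^ k) / (1 - q ^ 2).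
Proof.
  intros hq. unfold qnum.
  replace (2 * INR k) with (INR (2 * k)) by (rewrite mult_INR; simpl; ring).
  rewrite qpow_nat, pow_mult by auto. reflexivity.
Qed.

Lemma qnum_half q k : 0 < q -> qnum q (1 / 2 + INR k) = (1 - q * (q ^ 2) ^ k) / (1 - q ^ 2).
Proof.
  intros hq. unfold qnum.
  replace (2 * (1 / 2 + INR k)) with (INR (S (2 * k))) by (rewrite S_INR, mult_INR; simpl; field).
  rewrite qpow_nat by auto. rewrite <- tech_pow_Rmult, pow_mult. reflexivity.
Qed.

Lemma qfact_eq q n : 0 < q < 1 ->
  qfact q n = qpoch_partial (q ^ 2) (q ^ 2) n / (1 - q ^ 2) ^ n.
Proof.
  intros hq. assert (0 < 1 - q ^ 2) by nra.
  induction n as [|n IH]; [simpl; field|].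
  cbn [qfact qpoch_partial]. rewrite IH, qnum_nat by lra.
  rewrite <- (tech_pow_Rmult (q ^ 2) n), <- (tech_pow_Rmult (1 - q ^ 2) n).
  field. split; [apply pow_nonzero|]; lra.
Qed.

Lemma qhalf_eq q n : 0 < q < 1 ->
  qhalf q n = qpoch_partial q (q ^ 2) n / (1 - q ^ 2) ^ n.
Proof.
  intros hq. assert (0 < 1 - q ^ 2) by nra.
  induction n as [|n IH]; [simpl; field|].
  cbn [qhalf qpoch_partial]. rewrite IH, qnum_half by lra.
  rewrite <- (tech_pow_Rmult (1 - q ^ 2) n).
  field. split; [apply pow_nonzero|]; lra.
Qed.

Lemma summand_eq_gauss_term q n : 0 < q < 1 ->
  summand q n = q ^ 2 * (1 + q) ^ 2 * gauss_term (/ q) (/ q) (q ^ 2) (q ^ 4) (S n).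
Proof.
  intros hq. assert (0 < 1 - q ^ 2) by nra.
  unfold summand, gauss_term. rewrite qhalf_eq, !qfact_eq by auto.
  replace (n + 1)%nat with (S n) by lia. replace (n + 2)%nat with (S (S n)) by lia.
  rewrite (qpoch_partial_shift (/ q)), (qpoch_partial_shift (q ^ 2) _ (S n)).
  replace (/ q * q ^ 2) with q by (field; lra). replace (q ^ 2 * q ^ 2) with (q ^ 4) by ring.
  replace (q ^ 4 / (/ q * / q)) with (q ^ 6) by (field; lra).
  replace (6 * n + 6)%nat with (S n * 6)%nat by lia.
  rewrite Nat.mul_comm, pow_mult, <- !(tech_pow_Rmult (1 - q ^ 2)).
  assert (hq2 : 0 <= q ^ 2 < 1) by nra.
  assert (hq4 : 0 <= q ^ 4 < 1) by (replace (q ^ 4) with (q ^ 2 * q ^ 2) by ring; nra).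
  pose proof (qpoch_partial_pos (q ^ 2) hq2 (q ^ 4) (S n) hq4).
  pose proof (qpoch_partial_pos (q ^ 2) hq2 (q ^ 2) (S n) hq2).
  field. repeat split; try apply pow_nonzero; lra.
Qed.

Lemma is_series_summand_succ q (G : R) : 0 < q < 1 ->
  is_series (gauss_term (/ q) (/ q) (q ^ 2) (q ^ 4)) G ->
  is_series (fun n => summand q (S n)) (q ^ 2 * (1 + q) ^ 2 * (G - 1) - q ^ 6 / (1 + q ^ 2)).
Proof.
  intros hq hG.
  assert (hs0 : summand q 0 = q ^ 6 / (1 + q ^ 2)).
  { unfold summand. rewrite qhalf_eq, !qfact_eq by auto.
    assert (q * q < 1) by nra. assert (q * q * (q * q) < 1) by nra.
    simpl. field. repeat split; nra. }
  rewrite <- hs0. apply is_series_succ.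
  apply (is_series_ext (fun n => q ^ 2 * (1 + q) ^ 2 * gauss_term (/ q) (/ q) (q ^ 2) (q ^ 4) (S n))).
  { intros n. symmetry. apply summand_eq_gauss_term; auto. }
  replace (G - 1) with (G - gauss_term (/ q) (/ q) (q ^ 2) (q ^ 4) 0)
    by (unfold gauss_term; simpl; field; lra).
  exact (@is_series_scal_l R_AbsRing R_NormedModule _ _ _ (is_series_succ _ _ hG)).
Qed.

Lemma is_series_gauss_term_q q (A B : R) : 0 < q < 1 ->
  is_lim_seq (qpoch_partial (q ^ 2) (q ^ 2)) A -> is_lim_seq (qpoch_partial q (q ^ 2)) B ->
  is_series (gauss_term (/ q) (/ q) (q ^ 2) (q ^ 4))
    ((1 - q ^ 2) ^ 2 * (1 - q ^ 4) * B ^ 2 / ((1 - q) ^ 2 * (1 - q ^ 3) ^ 2 * A ^ 2)).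
Proof.
  intros hq hA hB.
  assert (hq2 : 0 <= q ^ 2 < 1) by nra.
  assert (hq4 : 0 <= q ^ 4 < 1) by (apply pow_lt_1_compat; [lra | lia]).
  assert (hq3 : q * q ^ 2 < 1) by nra.
  assert (hinv : 1 < / q) by (apply (Rmult_lt_reg_l q); [lra | rewrite Rinv_r; lra]).
  pose proof (qpoch_lim_pos (q ^ 2) hq2 (q ^ 2) A hq2 hA).
  assert (hA4 := is_lim_seq_qpoch_shift (q ^ 2) (q ^ 2) A ltac:(lra) hA).
  assert (hA6 := is_lim_seq_qpoch_shift (q ^ 2 * q ^ 2) (q ^ 2) _ ltac:(nra) hA4).
  assert (hB3 := is_lim_seq_qpoch_shift q (q ^ 2) B ltac:(lra) hB).
  assert (hB5 := is_lim_seq_qpoch_shift (q * q ^ 2) (q ^ 2) _ ltac:(lra) hB3).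
  replace (q ^ 2 * q ^ 2 * q ^ 2) with (q ^ 4 / (/ q * / q)) in hA6 by (field; lra).
  replace (q ^ 2 * q ^ 2) with (q ^ 4) in hA4, hA6 by ring.
  replace (q * q ^ 2 * q ^ 2) with (q ^ 4 / / q) in hB5 by (field; lra).
  pose proof (q_gauss_sum (/ q) (/ q) (q ^ 2) hq2 ltac:(nra) (q ^ 4) _ _ _ _
                hq4 ltac:(nra) hA4 hA6 hB5 hB5) as h.
  match type of h with is_series _ ?v => replace (_ / (_ * A ^ 2)) with v end; [exact h|].
  field. repeat split; nra.
Qed.

Theorem mainTheorem9 (q : R) (hq0 : 0 < q) (hq1 : q < 1) :
  exists A B Ssum : R,
    qpoch_inf_is (q ^ 2) (q ^ 2) A /\
    qpoch_inf_is q (q ^ 2) B /\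
    infinite_sum (fun n => summand q (S n)) Ssum /\
    q ^ 2 * (1 + q) ^ 2 * (1 + q ^ 2) + q ^ 6 + (1 + q ^ 2) * Ssum =
      (1 + q) ^ 6 * (1 + q ^ 2) ^ 2 / (pi_q_of q A B * (1 + q + q ^ 2) ^ 2)
      * qpow q (9 / 4).
Proof.
  assert (hq : 0 < q < 1) by lra. assert (hq2 : 0 <= q ^ 2 < 1) by nra.
  destruct (qpoch_partial_cvg (q ^ 2) hq2 (q ^ 2) hq2) as [A hA].
  destruct (qpoch_partial_cvg (q ^ 2) hq2 q ltac:(lra)) as [B hB].
  pose proof (qpoch_lim_pos (q ^ 2) hq2 (q ^ 2) A hq2 hA).
  pose proof (qpoch_lim_pos (q ^ 2) hq2 q B ltac:(lra) hB).
  pose proof (is_series_summand_succ q _ hq (is_series_gauss_term_q q A B hq hA hB)) as hS.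
  eexists A, B, _. split; [|split; [|split]].
  - apply is_lim_seq_Reals, hA.
  - apply is_lim_seq_Reals, hB.
  - apply is_series_Reals, hS.
  - replace (qpow q (9 / 4)) with (q ^ 2 * qpow q (1 / 4)).
    2: { rewrite <- (qpow_nat q 2) by lra. unfold qpow. rewrite <- exp_plus.
         f_equal. simpl. field. }
    pose proof (exp_pos (1 / 4 * ln q)). unfold pi_q_of, qpow in *.
    field. repeat split; nra.
Qed.
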